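(* Let $T$ be a theory and $\Gamma$ a set of formulas. If $T+\mathrm{IND}(\Gamma)$ is inconsistent, then $\mathrm{GSI}^\omega_\Gamma(\mathit{sk}^\exists(T))$ is inconsistent.
   Context: $\mathit{sk}^\exists$ (existential Skolemization with canonical Skolem symbols $\mathfrak{s}_{Qx\varphi}$, a new function symbol of arity $|\mathrm{FV}(Qx\varphi)|$ for each formula $Qx\varphi$): together with its dual $\mathit{sk}^\forall$, $\mathit{sk}^Q$ fixes atoms, commutes with $\wedge,\vee$, $\mathit{sk}^Q(\neg A)=\neg\mathit{sk}^{\overline Q}(A)$, $\mathit{sk}^Q(QxA(x,\vec y))=\mathit{sk}^Q(A(\mathfrak{s}_{QxA}(\vec y),\vec y))$ ($\vec y$ exactly the free variables of $QxA$), $\mathit{sk}^Q(\overline QxA)=\overline Qx\,\mathit{sk}^Q(A)$; elementwise on theories. $I_x\varphi=\forall\vec z(\varphi(0,\vec z)\wedge\forall x(\varphi(x,\vec z)\to\varphi(s(x),\vec z))\to\forall x\varphi(x,\vec z))$, $\mathrm{IND}(\Gamma)=\{I_x\gamma:\gamma\in\Gamma\}$. $\Gamma\downarrow L=\{\gamma(\vec x,t_1,\dots,t_n):\gamma(\vec x,z_1,\dots,z_n)\in\Gamma,\ t_i$ ground $L$ terms$\}$; $\Delta^-$ = formulas of $\Delta$ with at most one free variable; $\mathrm{GSI}_\Gamma(T)=T+\mathit{sk}^\exists(\mathrm{IND}((\Gamma\downarrow L(T))^-))$, $\mathrm{GSI}^\omega_\Gamma(T)=\bigcup_i\mathrm{GSI}^i_\Gamma(T)$.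 *)

From mathcomp Require Import all_boot.

Set Implicit Arguments.
Unset Strict Implicit.
Unset Printing Implicit Defensive.

(* A signature: base function symbols (containing 0 and s) and predicate symbols.
   Arities are not enforced syntactically; symbols are interpreted on lists. *)
Record signature := Signature {
  fsym : Type;
  psym : Type;
  sig_zero : fsym;
  sig_succ : fsym
}.

Inductive quant := QAll | QEx.

Definition qdual (q : quant) := match q with QAll => QEx | QEx => QAll end.

Section Syntax.
Variable Sg : signature.

(* Terms and formulas. [Sk q A args] is the canonical Skolem symbol
   s_{q A} (for the formula "q x. A", A with de Bruijn index 0 bound)
   applied to the argument list [args]. *)
Inductive term :=
| Var : nat -> term
| Fn : fsym Sg -> list term -> term
| Sk : quant -> form -> list term -> term
with form :=
| Eq : term -> term -> form
| Pr : psym Sg -> list term -> form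
| Neg : form -> form
| And : form -> form -> form
| Or : form -> form -> form
| All : form -> form
| Ex : form -> form.

Definition Imp (A B : form) : form := Or (Neg A) B.
Definition Qf (q : quant) (A : form) : form :=
  match q with QAll => All A | QEx => Ex A end.

(* renaming and substitution (parallel, capture avoiding, de Bruijn);
   Skolem labels are names and are not touched *)
Fixpoint ren_t (xi : nat -> nat) (t : term) : term :=
  match t with
  | Var n => Var (xi n)
  | Fn f l => Fn f (map (ren_t xi) l)
  | Sk q A l => Sk q A (map (ren_t xi) l)
  end.

Definition up (sigma : nat -> term) (n : nat) : term :=
  match n with 0 => Var 0 | m.+1 => ren_t succn (sigma m) end.

Fixpoint subst_t (sigma : nat -> term) (t : term) : term :=
  match t with
  | Var n => sigma n
  | Fn f l => Fn f (map (subst_t sigma) l)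
  | Sk q A l => Sk q A (map (subst_t sigma) l)
  end.

Fixpoint subst (sigma : nat -> term) (A : form) : form :=
  match A with
  | Eq t u => Eq (subst_t sigma t) (subst_t sigma u)
  | Pr p l => Pr p (map (subst_t sigma) l)
  | Neg B => Neg (subst sigma B)
  | And B C => And (subst sigma B) (subst sigma C)
  | Or B C => Or (subst sigma B) (subst sigma C)
  | All B => All (subst (up sigma) B)
  | Ex B => Ex (subst (up sigma) B)
  end.

Definition scons (t : term) (sigma : nat -> term) (n : nat) : term :=
  match n with 0 => t | m.+1 => sigma m end.

Fixpoint fv_t (t : term) : seq nat :=
  match t with
  | Var n => [:: n]
  | Fn _ l => flatten (map fv_t l)
  | Sk _ _ l => flatten (map fv_t l)
  end.

Fixpoint fv (A : form) : seq nat :=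
  match A with
  | Eq t u => fv_t t ++ fv_t u
  | Pr _ l => flatten (map fv_t l)
  | Neg B => fv B
  | And B C => fv B ++ fv C
  | Or B C => fv B ++ fv C
  | All B => [seq n.-1 | n <- fv B & n != 0]
  | Ex B => [seq n.-1 | n <- fv B & n != 0]
  end.

Definition FV (A : form) : seq nat := sort leq (undup (fv A)).

Definition skterm (q : quant) (A : form) : term :=
  Sk q A [seq Var n | n <- FV (Qf q A)].

(* sk_aux q sigma A = sk^q (A sigma); defined structurally.
   sk^q(q x A) = sk^q(A(s_{qxA}(y))), sk^q(dual x A) = dual x sk^q(A),
   sk^q(~A) = ~ sk^{dual q}(A), commutes with /\, \/, fixes atoms. *)
Fixpoint sk_aux (q : quant) (sigma : nat -> term) (A : form) : form :=
  match A with
  | Eq _ _ | Pr _ _ => subst sigma A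
  | Neg B => Neg (sk_aux (qdual q) sigma B)
  | And B C => And (sk_aux q sigma B) (sk_aux q sigma C)
  | Or B C => Or (sk_aux q sigma B) (sk_aux q sigma C)
  | All B =>
      match q with
      | QAll => sk_aux q (scons (skterm QAll (subst (up sigma) B)) sigma) B
      | QEx => All (sk_aux q (up sigma) B)
      end
  | Ex B =>
      match q with
      | QEx => sk_aux q (scons (skterm QEx (subst (up sigma) B)) sigma) B
      | QAll => Ex (sk_aux q (up sigma) B)
      end
  end.

Definition sk (q : quant) (A : form) : form := sk_aux q Var A.

Definition theory := form -> Prop.

Definition tunion (T U : theory) : theory := fun A => T A \/ U A.
Definition sk_th (q : quant) (T : theory) : theory :=
  fun A => exists B, T B /\ A = sk q B.

Definition zero_t : term := Fn (sig_zero Sg) [::].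
Definition succ_t (t : term) : term := Fn (sig_succ Sg) [:: t].

Fixpoint all_n (n : nat) (A : form) : form :=
  match n with 0 => A | m.+1 => All (all_n m A) end.

(* I_x phi = forall z (phi(0,z) /\ forall x (phi(x,z) -> phi(s x,z)) -> forall x phi(x,z)),
   z = all free variables of phi other than x (universally closed). *)
Definition Ind (x : nat) (phi : form) : form :=
  let phi' := subst (fun n => if n == x then Var 0 else Var n.+1) phi in
  let body :=
    Imp (And (subst (scons zero_t Var) phi')
             (All (Imp phi' (subst (scons (succ_t (Var 0)) (fun n => Var n.+1)) phi'))))
        (All phi') in
  all_n (foldr maxn 0 (map succn (fv body))) body.

Definition IND (G : theory) : theory :=
  fun A => exists x phi, G phi /\ A = Ind x phi.

Inductive symb := SF of fsym Sg | SS of quant & form.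

Fixpoint occ_t (s : symb) (t : term) : Prop :=
  match t with
  | Var _ => False
  | Fn f l => s = SF f \/ foldr (fun u P => occ_t s u \/ P) False l
  | Sk q A l => s = SS q A \/ foldr (fun u P => occ_t s u \/ P) False l
  end.

Fixpoint occ (s : symb) (A : form) : Prop :=
  match A with
  | Eq t u => occ_t s t \/ occ_t s u
  | Pr _ l => foldr (fun u P => occ_t s u \/ P) False l
  | Neg B => occ s B
  | And B C | Or B C => occ s B \/ occ s C
  | All B | Ex B => occ s B
  end.

Definition Lang (T : theory) (s : symb) : Prop :=
  s = SF (sig_zero Sg) \/ s = SF (sig_succ Sg) \/ exists A, T A /\ occ s A.

Fixpoint ground_in (L : symb -> Prop) (t : term) : Prop :=
  match t with
  | Var _ => False
  | Fn f l => L (SF f) /\ foldr (fun u P => ground_in L u /\ P) True l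
  | Sk q A l => L (SS q A) /\ foldr (fun u P => ground_in L u /\ P) True l
  end.

Definition down (G : theory) (L : symb -> Prop) : theory :=
  fun A => exists phi sigma, G phi /\
    (forall n, sigma n = Var n \/ ground_in L (sigma n)) /\ A = subst sigma phi.

Definition minus (D : theory) : theory :=
  fun A => D A /\ size (undup (fv A)) <= 1.

Definition GSI (G T : theory) : theory :=
  tunion T (sk_th QEx (IND (minus (down G (Lang T))))).

Definition GSIw (G T : theory) : theory :=
  fun A => exists i, iter i (GSI G) T A.

End Syntax.

Record model (Sg : signature) := Model {
  dom : Type;
  dom_pt : dom;
  fI : fsym Sg -> list dom -> dom;
  skI : quant -> form Sg -> list dom -> dom;
  pI : psym Sg -> list dom -> Prop
}.

Section Semantics.
Variables (Sg : signature) (M : model Sg).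

Fixpoint eval (rho : nat -> dom M) (t : term Sg) : dom M :=
  match t with
  | Var n => rho n
  | Fn f l => @fI _ M f (map (eval rho) l)
  | Sk q A l => @skI _ M q A (map (eval rho) l)
  end.

Definition dcons (d : dom M) (rho : nat -> dom M) (n : nat) : dom M :=
  match n with 0 => d | m.+1 => rho m end.

Fixpoint sat (rho : nat -> dom M) (A : form Sg) : Prop :=
  match A with
  | Eq t u => eval rho t = eval rho u
  | Pr p l => @pI _ M p (map (eval rho) l)
  | Neg B => ~ sat rho B
  | And B C => sat rho B /\ sat rho C
  | Or B C => sat rho B \/ sat rho C
  | All B => forall d, sat (dcons d rho) B
  | Ex B => exists d, sat (dcons d rho) B
  end.

Definition models (T : theory Sg) : Prop :=
  forall A, T A -> forall rho, sat rho A.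
End Semantics.

Definition inconsistent (Sg : signature) (T : theory Sg) : Prop :=
  ~ exists M : model Sg, models M T.

(* Let M be a model of GSI^omega_Gamma(sk^E(T)), with stages T_0 = sk^E(T) and
   T_(i+1) = GSI_Gamma(T_i), and let N be the substructure of M generated by the
   ground terms of L_omega, the union of the languages L(T_i).  Skolemized
   formulas are universal, so every sk^E(A) in some T_i holds in N, and sk^E(A)
   implies A; in particular N |= T.  For an induction axiom I_x phi and an
   assignment into N, every parameter of phi is named by a ground L_omega-term,
   hence by a ground L(T_i)-term for one common stage i.  Substituting these
   names gives an instance of phi in (Gamma|L(T_i))^-, whose Skolemized
   induction axiom belongs to T_(i+1), so it holds in N; at the given assignment
   it says the same as I_x phi.  Thus N |= T + IND(Gamma). *)

From mathcomp Require Import all_boot.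
From Stdlib Require List.
From Stdlib Require Import Setoid Classical FunctionalExtensionality.
From Stdlib Require Import ProofIrrelevance ClassicalEpsilon.

Set Implicit Arguments.
Unset Strict Implicit.

Lemma foldr_andP (T : Type) (P : T -> Prop) (l : list T) :
  foldr (fun u Q => P u /\ Q) True l <-> forall u, List.In u l -> P u.
Proof.
elim: l => [|v l IH] //=; rewrite IH.
split=> [[Pv Pl] u [<-|/Pl]|Pl] //.
by split=> [|u Hu]; apply: Pl; [left|right].
Qed.

Lemma foldr_orP (T : Type) (P : T -> Prop) (l : list T) :
  foldr (fun u Q => P u \/ Q) False l <-> exists2 u, List.In u l & P u.
Proof.
elim: l => [|v l IH] /=; first by split=> // -[].
rewrite IH; split=> [[Pv|[u Hu Pu]]|[u [<-|Hu] Pu]].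
- by exists v; first left.
- by exists u; first right.
- by left.
- by right; exists u.
Qed.

Lemma map_ext_In (A B : Type) (f g : A -> B) (l : list A) :
  (forall x, List.In x l -> f x = g x) -> map f l = map g l.
Proof.
elim: l => //= x l IH fg; rewrite (fg x (or_introl erefl)) IH // => y Hy.
by apply: fg; right.
Qed.

Lemma flatten_map_nil (A B : Type) (f : A -> seq B) (l : list A) :
  (forall x, List.In x l -> f x = [::]) -> flatten (map f l) = [::].
Proof.
elim: l => //= x l IH fx; rewrite (fx x (or_introl erefl)) IH // => y Hy.
by apply: fx; right.
Qed.

Lemma In_mem (T : eqType) (x : T) (s : seq T) : List.In x s <-> x \in s.
Proof.
elim: s => [|y s IH] //=; rewrite in_cons.
by split=> [[->|/IH ->]|/orP [/eqP ->|/IH]]; rewrite ?eqxx ?orbT; [| |left|right].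
Qed.

Lemma exists_common_index (A : Type) (Q : nat -> A -> Prop) (l : list A) :
  (forall i j x, i <= j -> Q i x -> Q j x) ->
  (forall x, List.In x l -> exists i, Q i x) -> exists i, forall x, List.In x l -> Q i x.
Proof.
move=> Qmono; elim: l => [|x l IH] Ql; first by exists 0.
have [i Qi] := Ql x (or_introl erefl).
have [j Qj] := IH (fun y Hy => Ql y (or_intror Hy)).
exists (maxn i j) => y [<-|/Qj]; first exact: Qmono (leq_maxl i j) Qi.
exact: Qmono (leq_maxr i j).
Qed.

Definition upd (D : Type) (rho : nat -> D) (x : nat) (d : D) (n : nat) : D :=
  if n == x then d else rho n.

Section Terms.
Variable S : signature.

Definition term_nested_ind (P : term S -> Prop)
  (HV : forall n, P (Var S n))
  (HF : forall f l, (forall u, List.In u l -> P u) -> P (Fn f l))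
  (HS : forall q A l, (forall u, List.In u l -> P u) -> P (Sk q A l)) : forall t, P t :=
  fix go t :=
  let fix go_list l : forall u, List.In u l -> P u :=
    match l with
    | nil => fun u (H : False) => match H with end
    | cons v l' => fun u H => match H with
        | or_introl e => eq_rect v P (go v) u e
        | or_intror H' => go_list l' u H' end
    end in
  match t with
  | Var n => HV n
  | Fn f l => HF f l (go_list l)
  | Sk q A l => HS q A l (go_list l)
  end.

Lemma mem_flatten_map (A : Type) (f : A -> seq nat) (l : list A) m :
  m \in flatten (map f l) <-> exists2 u, List.In u l & m \in f u.
Proof.
elim: l => [|u l IH] /=; first by split=> // -[].
rewrite mem_cat; split.
- by case/orP => [Hm|/IH [v Hv Hm]]; [exists u; first left | exists v; first right].
- by case=> v [<-|Hv] Hm; [rewrite Hm | apply/orP; right; apply/IH; exists v].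
Qed.

Lemma fv_ren_t xi (t : term S) : fv_t (ren_t xi t) = map xi (fv_t t).
Proof.
elim/term_nested_ind: t => [n|f l IH|q A l IH] //=; rewrite map_flatten -!map_comp;
  congr flatten; exact: map_ext_In.
Qed.

Lemma fv_subst_t sigma (t : term S) m :
  m \in fv_t (subst_t sigma t) -> exists2 n, n \in fv_t t & m \in fv_t (sigma n).
Proof.
elim/term_nested_ind: t => [n|f l IH|q A l IH] /=; first by exists n; rewrite ?mem_seq1.
all: rewrite -map_comp => /mem_flatten_map [u Hu /(IH u Hu) [n Hn Hm]].
all: by exists n => //; apply/mem_flatten_map; exists u.
Qed.

Lemma fv_subst (A : form S) sigma m :
  m \in fv (subst sigma A) -> exists2 n, n \in fv A & m \in fv_t (sigma n).
Proof.
have fv_binder (B : form S) : (forall sigma m, m \in fv (subst sigma B) ->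
      exists2 n, n \in fv B & m \in fv_t (sigma n)) ->
    forall sigma m, m \in [seq n.-1 | n <- fv (subst (up sigma) B) & n != 0] ->
      exists2 n, n \in [seq n.-1 | n <- fv B & n != 0] & m \in fv_t (sigma n).
  move=> IH {}sigma {}m /mapP [k]; rewrite mem_filter => /andP [k0 Hk] ->.
  have [[|n] Hn] := IH _ _ Hk; first by rewrite /= mem_seq1 => /eqP k_eq0; rewrite k_eq0 in k0.
  rewrite /= fv_ren_t => /mapP [j Hj ->].
  by exists n => //; apply/mapP; exists n.+1; rewrite ?mem_filter.
elim: A sigma m => [t u|p l|B IH|B IHB C IHC|B IHB C IHC|B IH|B IH] sigma m /=;
  try exact: fv_binder.
- by rewrite mem_cat => /orP [] /fv_subst_t [n Hn Hm]; exists n; rewrite // mem_cat Hn ?orbT.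
- rewrite -map_comp => /mem_flatten_map [u Hu /fv_subst_t [n Hn Hm]].
  by exists n => //; apply/mem_flatten_map; exists u.
- exact: IH.
- by rewrite mem_cat => /orP [/IHB|/IHC] [n Hn Hm]; exists n; rewrite // mem_cat Hn ?orbT.
- by rewrite mem_cat => /orP [/IHB|/IHC] [n Hn Hm]; exists n; rewrite // mem_cat Hn ?orbT.
Qed.

Lemma ground_in_fv L (t : term S) : ground_in L t -> fv_t t = [::].
Proof.
elim/term_nested_ind: t => [n|f l IH|q A l IH] //= [_ /foldr_andP Gl].
all: by apply: flatten_map_nil => u Hu; apply: IH Hu (Gl u Hu).
Qed.

Lemma size_undup_fv_subst (A : form S) x sigma :
  sigma x = Var S x -> (forall n, n \in fv A -> n != x -> fv_t (sigma n) = [::]) ->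
  size (undup (fv (subst sigma A))) <= 1.
Proof.
move=> sigma_x closed; apply: (uniq_leq_size (s2 := [:: x])); first exact: undup_uniq.
move=> m; rewrite mem_undup mem_seq1 => /fv_subst [n Hn].
by case: (eqVneq n x) => [->|nx]; [rewrite sigma_x mem_seq1 | rewrite closed].
Qed.

Lemma ground_in_mono (L L' : symb S -> Prop) (t : term S) :
  (forall s, L s -> L' s) -> ground_in L t -> ground_in L' t.
Proof.
move=> LL'; elim/term_nested_ind: t => [n|f l IH|q A l IH] //= [Ls /foldr_andP Gl].
all: by split; [exact: LL' | apply/foldr_andP => u Hu; apply: IH Hu (Gl u Hu)].
Qed.

Lemma ground_in_occ_t (L : symb S -> Prop) (t : term S) s :
  ground_in L t -> occ_t s t -> L s.
Proof.
elim/term_nested_ind: t => [n|f l IH|q A l IH] //= [Ls /foldr_andP Gl].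
all: by case=> [->|/foldr_orP [u Hu]] //; apply: IH Hu (Gl u Hu).
Qed.

Lemma ground_in_chain (Lc : nat -> symb S -> Prop) (t : term S) :
  (forall i j s, i <= j -> Lc i s -> Lc j s) ->
  ground_in (fun s => exists i, Lc i s) t -> exists i, ground_in (Lc i) t.
Proof.
move=> Lmono.
have Gmono i j u : i <= j -> ground_in (Lc i) u -> ground_in (Lc j) u.
  by move=> ij; apply: ground_in_mono => s; apply: Lmono.
elim/term_nested_ind: t => [n|f l IH|q A l IH] //= [[i Ls] /foldr_andP Gl].
all: have [j Gj] := exists_common_index Gmono (fun u Hu => IH u Hu (Gl u Hu)).
all: exists (maxn i j); split; first by apply: Lmono Ls; apply: leq_maxl.
all: by apply/foldr_andP => u Hu; apply: Gmono (Gj u Hu); apply: leq_maxr.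
Qed.
End Terms.

Section Semantics.
Variables (S : signature) (M : model S).
Implicit Types (rho : nat -> dom M) (sigma : nat -> term S).

Lemma eval_ren_t rho xi t : eval rho (ren_t xi t) = eval (rho \o xi) t.
Proof.
elim/term_nested_ind: t => [n|f l IH|q A l IH] //=; rewrite -map_comp;
  congr (_ _ _); exact: map_ext_In.
Qed.

Lemma eval_subst_t rho sigma t :
  eval rho (subst_t sigma t) = eval (eval rho \o sigma) t.
Proof.
elim/term_nested_ind: t => [n|f l IH|q A l IH] //=; rewrite -map_comp;
  congr (_ _ _); exact: map_ext_In.
Qed.

Lemma eval_up rho d sigma :
  eval (dcons d rho) \o up sigma = dcons d (eval rho \o sigma).
Proof. by apply: functional_extensionality => -[|n] //=; rewrite eval_ren_t. Qed.

Lemma eval_scons rho t sigma :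
  eval rho \o scons t sigma = dcons (eval rho t) (eval rho \o sigma).
Proof. by apply: functional_extensionality => -[]. Qed.

Lemma sat_subst A rho sigma : sat rho (subst sigma A) <-> sat (eval rho \o sigma) A.
Proof.
elim: A rho sigma => [t u|p l|B IH|B IHB C IHC|B IHB C IHC|B IH|B IH] rho sigma /=.
- by rewrite !eval_subst_t.
- rewrite -map_comp (map_ext_In (g := eval (eval rho \o sigma))) // => t _ /=.
  by rewrite eval_subst_t.
- by rewrite IH.
- by rewrite IHB IHC.
- by rewrite IHB IHC.
- by split=> H d; move: (H d); rewrite IH eval_up.
- by split=> -[d H]; exists d; move: H; rewrite IH eval_up.
Qed.

Lemma sat_subst_id A rho sigma :
  (forall n, eval rho (sigma n) = rho n) -> sat rho (subst sigma A) <-> sat rho A.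
Proof.
move=> sigma_id; rewrite sat_subst.
by have -> // : eval rho \o sigma = rho; apply: functional_extensionality.
Qed.

Lemma sat_Imp rho A B : sat rho (Imp A B) <-> (sat rho A -> sat rho B).
Proof. by split=> [[]|/imply_to_or [|]]; [| |left|right]. Qed.

Lemma valid_all_n n A :
  (forall rho, sat rho (all_n n A)) <-> forall rho, sat rho A.
Proof.
elim: n => [|n IH] //=; rewrite -IH; split=> H rho; last by move=> d; apply: H.
have -> : rho = dcons (rho 0) (rho \o succn) by apply: functional_extensionality => -[].
exact: H.
Qed.

(* Skolemization is sound in every structure: the Skolem term for an eliminated
   quantifier is a witness (dually, a counterexample under a negation). *)
Lemma sat_sk_aux A q rho sigma :
  if q is QEx then sat rho (sk_aux QEx sigma A) -> sat (eval rho \o sigma) A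
  else sat (eval rho \o sigma) A -> sat rho (sk_aux QAll sigma A).
Proof.
elim: A q rho sigma => [t u|p l|B IH|B IHB C IHC|B IHB C IHC|B IH|B IH] [] rho sigma /=.
- by move=> H; apply/(sat_subst (Eq t u)).
- by move=> /(sat_subst (Eq t u)).
- by move=> H; apply/(sat_subst (Pr p l)).
- by move=> /(sat_subst (Pr p l)).
- by move=> nB /(IH QEx).
- by move=> nB /(IH QAll).
- by case=> /(IHB QAll) ? /(IHC QAll).
- by case=> /(IHB QEx) ? /(IHC QEx).
- by case=> [/(IHB QAll)|/(IHC QAll)]; [left|right].
- by case=> [/(IHB QEx)|/(IHC QEx)]; [left|right].
- by move=> H; apply: (IH QAll); rewrite eval_scons; apply: H.
- by move=> H d; move: (IH QEx _ _ (H d)); rewrite eval_up.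
- by case=> d H; exists d; apply: (IH QAll); rewrite eval_up.
- move=> H; move: (IH QEx _ _ H); rewrite eval_scons.
  by exists (eval rho (skterm QEx (subst (up sigma) B))).
Qed.

Lemma sat_sk_ex rho A : sat rho (sk QEx A) -> sat rho A.
Proof. exact: (sat_sk_aux A QEx). Qed.
End Semantics.

Definition ind_principle (D : Type) (z : D) (s : D -> D) (P : D -> Prop) : Prop :=
  P z /\ (forall d, P d -> P (s d)) -> forall d, P d.

Lemma ind_principle_ext (D : Type) (z : D) (s : D -> D) (P Q : D -> Prop) :
  (forall d, P d <-> Q d) -> ind_principle z s P -> ind_principle z s Q.
Proof. by move=> PQ IP [/PQ Pz Qs] d; apply/PQ/IP; split=> // e /PQ /Qs /PQ. Qed.

Section InductionAxioms.
Variables (S : signature) (M : model S).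
Implicit Types (rho : nat -> dom M) (x : nat) (A : form S).

Definition Ind_body x A : form S :=
  let A' := subst (fun n => if n == x then Var S 0 else Var S n.+1) A in
  Imp (And (subst (scons (zero_t S) (Var S)) A')
           (All (Imp A' (subst (scons (succ_t (Var S 0)) (fun n => Var S n.+1)) A'))))
      (All A').

Lemma valid_Ind x A :
  (forall rho, sat rho (Ind x A)) <-> forall rho, sat rho (Ind_body x A).
Proof. exact: valid_all_n. Qed.

Lemma sat_Ind_body rho x A :
  sat rho (Ind_body x A) <->
  ind_principle (fI (sig_zero S) [::]) (fun d => fI (sig_succ S) [:: d])
                (fun d => sat (upd rho x d) A).
Proof.
rewrite /Ind_body; set xi := fun n => _.
have sat_A' d : sat (dcons d rho) (subst xi A) <-> sat (upd rho x d) A.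
  suff <- : eval (dcons d rho) \o xi = upd rho x d by apply: sat_subst.
  by apply: functional_extensionality => n; rewrite /xi /upd /=; case: (n == x).
have sat_zero : sat rho (subst (scons (zero_t S) (Var S)) (subst xi A)) <->
                sat (upd rho x (fI (sig_zero S) [::])) A.
  by rewrite sat_subst eval_scons; apply: sat_A'.
have sat_succ d :
    sat (dcons d rho) (subst (scons (succ_t (Var S 0)) (fun n => Var S n.+1)) (subst xi A)) <->
    sat (upd rho x (fI (sig_succ S) [:: d])) A.
  by rewrite sat_subst eval_scons; apply: sat_A'.
rewrite sat_Imp /= sat_zero /ind_principle.
by setoid_rewrite sat_Imp; setoid_rewrite sat_A'; setoid_rewrite sat_succ.
Qed.
End InductionAxioms.

Fixpoint only_quant (S : signature) (q : quant) (A : form S) : bool :=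
  match A with
  | Eq _ _ | Pr _ _ => true
  | Neg B => only_quant (qdual q) B
  | And B C | Or B C => only_quant q B && only_quant q C
  | All B => (if q is QAll then true else false) && only_quant q B
  | Ex B => (if q is QEx then true else false) && only_quant q B
  end.

Lemma only_quant_sk_aux (S : signature) q sigma (A : form S) :
  only_quant (qdual q) (sk_aux q sigma A).
Proof.
elim: A q sigma => [t u|p l|B IH|B IHB C IHC|B IHB C IHC|B IH|B IH] [] sigma //=;
  by rewrite ?(IH QAll) ?(IH QEx) ?(IHB QAll) ?(IHB QEx) ?(IHC QAll) ?(IHC QEx).
Qed.

Section TermSubmodel.
Variables (S : signature) (M : model S) (L : symb S -> Prop).
Hypothesis L_zero : L (SF (sig_zero S)).

Definition denotable (d : dom M) : Prop :=
  exists t, ground_in L t /\ forall rho, eval rho t = d.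

Definition sub_dom : Type := {d : dom M | denotable d}.

Lemma denotable_list (l : list sub_dom) :
  exists ts, (forall t, List.In t ts -> ground_in L t) /\
             forall rho, map (eval rho) ts = map sval l.
Proof.
elim: l => [|[d [t [Gt Et]]] l [ts [Gts Ets]]]; first by exists [::].
exists (t :: ts); split=> [u [<-|/Gts]|rho] //=.
by rewrite Et Ets.
Qed.

Lemma denotable_zero : denotable (fI (sig_zero S) [::]).
Proof. by exists (zero_t S). Qed.

Lemma denotable_fI f (l : list sub_dom) : L (SF f) -> denotable (fI f (map sval l)).
Proof.
have [ts [Gts Ets]] := denotable_list l.
by exists (Fn f ts); split=> [|rho /=]; [split=> //; apply/foldr_andP | rewrite Ets].
Qed.

Lemma denotable_skI q A (l : list sub_dom) :
  L (SS q A) -> denotable (skI (m:=M) q A (map sval l)).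
Proof.
have [ts [Gts Ets]] := denotable_list l.
by exists (Sk q A ts); split=> [|rho /=]; [split=> //; apply/foldr_andP | rewrite Ets].
Qed.

Definition sub_zero : sub_dom := exist _ _ denotable_zero.

(* Symbols outside L get the junk value 0; only formulas over L are transferred
   between M and the submodel. *)
Definition sub_fI f (l : list sub_dom) : sub_dom :=
  match excluded_middle_informative (L (SF f)) with
  | left Lf => exist _ _ (denotable_fI l Lf)
  | right _ => sub_zero
  end.

Definition sub_skI q A (l : list sub_dom) : sub_dom :=
  match excluded_middle_informative (L (SS q A)) with
  | left LA => exist _ _ (denotable_skI l LA)
  | right _ => sub_zero
  end.

Definition term_submodel : model S :=
  Model sub_zero sub_fI sub_skI (fun p l => pI (m:=M) p (map sval l)).

Local Notation N := term_submodel.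

Lemma sval_inj (a b : sub_dom) : sval a = sval b -> a = b.
Proof. by case: a b => [a Ha] [b Hb] /= ab; subst b; rewrite (proof_irrelevance _ Ha Hb). Qed.

Lemma eval_term_submodel (rho : nat -> sub_dom) t : (forall s, occ_t s t -> L s) ->
  sval (eval (M:=N) rho t) = eval (sval \o rho) t.
Proof.
elim/term_nested_ind: t => [n|f l IH|q A l IH] //= Lt.
- rewrite /sub_fI; case: excluded_middle_informative => [Lf|[]]; last by apply: Lt; left.
  rewrite /= -map_comp; congr (fI f _); apply: map_ext_In => u Hu /=.
  by apply: IH => // s Hs; apply: Lt; right; apply/foldr_orP; exists u.
- rewrite /sub_skI; case: excluded_middle_informative => [LA|[]]; last by apply: Lt; left.
  rewrite /= -map_comp; congr (skI q A _); apply: map_ext_In => u Hu /=.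
  by apply: IH => // s Hs; apply: Lt; right; apply/foldr_orP; exists u.
Qed.

Lemma term_submodel_named (d : sub_dom) :
  exists t, ground_in L t /\ forall rho, eval (M:=N) rho t = d.
Proof.
case: (svalP d) => t [Gt Et]; exists t; split=> // rho; apply: sval_inj.
by rewrite eval_term_submodel ?Et // => s; apply: ground_in_occ_t.
Qed.

Lemma sval_dcons (d : sub_dom) (rho : nat -> sub_dom) :
  sval \o dcons (M:=N) d rho = dcons (M:=M) (sval d) (sval \o rho).
Proof. by apply: functional_extensionality => -[]. Qed.

(* Universal formulas go down to the substructure, existential ones go up. *)
Lemma sat_term_submodel A q (rho : nat -> sub_dom) :
  (forall s, occ s A -> L s) -> only_quant q A ->
  if q is QAll then sat (sval \o rho) A -> sat (M:=N) rho A
  else sat (M:=N) rho A -> sat (sval \o rho) A.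
Proof.
elim: A q rho => [t u|p l|B IH|B IHB C IHC|B IHB C IHC|B IH|B IH] q rho /= LA.
- have Et := eval_term_submodel rho (fun s Hs => LA s (or_introl Hs)).
  have Eu := eval_term_submodel rho (fun s Hs => LA s (or_intror Hs)).
  by case: q => _; rewrite -Et -Eu; [apply: sval_inj | move->].
- suff -> : map sval (map (eval (M:=N) rho) l) = map (eval (sval \o rho)) l by case: q.
  rewrite -map_comp; apply: map_ext_In => u Hu; apply: eval_term_submodel => s Hs.
  by apply: LA; apply/foldr_orP; exists u.
- by move=> /(IH _ rho LA); case: q => /= H nB /H.
- case/andP=> /(IHB q rho (fun s Hs => LA s (or_introl Hs))) HB.
  move=> /(IHC q rho (fun s Hs => LA s (or_intror Hs))) HC.
  by case: q HB HC => /= HB HC [/HB ? /HC].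
- case/andP=> /(IHB q rho (fun s Hs => LA s (or_introl Hs))) HB.
  move=> /(IHC q rho (fun s Hs => LA s (or_intror Hs))) HC.
  by case: q HB HC => /= HB HC [/HB|/HC]; [left|right|left|right].
- case: q => //= /(fun H d => IH QAll (dcons (M:=N) d rho) LA H) HB H d.
  by apply: HB; rewrite sval_dcons; apply: H.
- case: q => //= /(fun H d => IH QEx (dcons (M:=N) d rho) LA H) HB [d /HB].
  by rewrite sval_dcons; exists (sval d).
Qed.

Lemma valid_term_submodel_sk A : (forall s, occ s (sk QEx A) -> L s) ->
  (forall rho : nat -> dom M, sat rho (sk QEx A)) -> forall rho, sat (M:=N) rho A.
Proof.
move=> LA HA rho; apply: sat_sk_ex.
exact: (sat_term_submodel (q := QAll) rho LA (only_quant_sk_aux QEx _ A)).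
Qed.
End TermSubmodel.

Section GSIChain.
Variables (S : signature) (G T0 : theory S).

Definition stage (i : nat) : theory S := iter i (GSI G) T0.

Lemma stage_mono i j A : i <= j -> stage i A -> stage j A.
Proof.
elim: j => [|j IH]; first by rewrite leqn0 => /eqP ->.
by rewrite leq_eqVlt => /orP [/eqP -> //|/IH ij] /ij; left.
Qed.

Lemma Lang_stage_mono i j s : i <= j -> Lang (stage i) s -> Lang (stage j) s.
Proof.
by move=> ij [|[|[A [/(stage_mono ij) HA Hs]]]]; [left|right; left|right; right; exists A].
Qed.

Definition Lomega (s : symb S) : Prop := exists i, Lang (stage i) s.

Lemma Lomega_zero : Lomega (SF (sig_zero S)).
Proof. by exists 0; left. Qed.

Lemma ground_in_Lomega t : ground_in Lomega t -> exists i, ground_in (Lang (stage i)) t.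
Proof. by apply: ground_in_chain => i j s; apply: Lang_stage_mono. Qed.

Lemma sk_Ind_instance_stage i x phi sigma : G phi ->
  (forall n, if (n \in fv phi) && (n != x) then ground_in (Lang (stage i)) (sigma n)
             else sigma n = Var S n) ->
  stage i.+1 (sk QEx (Ind x (subst sigma phi))).
Proof.
move=> Gphi sigmaP; right; exists (Ind x (subst sigma phi)); split=> //.
exists x, (subst sigma phi); split=> //; split.
- exists phi, sigma; split=> //; split=> // n.
  by have := sigmaP n; case: ifP => _; [right|left].
- apply: (size_undup_fv_subst (x := x)) => [|n Hn nx].
    by have := sigmaP x; rewrite eqxx andbF.
  by have := sigmaP n; rewrite Hn nx => /ground_in_fv.
Qed.

Variables (M : model S).
Hypothesis M_GSIw : models M (GSIw G T0).

Local Notation N := (term_submodel M Lomega_zero).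

Lemma valid_term_submodel_stage i A : stage i (sk QEx A) -> forall rho, sat (M:=N) rho A.
Proof.
move=> HA; apply: valid_term_submodel_sk; last by apply: M_GSIw; exists i.
by move=> s Hs; exists i; right; right; exists (sk QEx A).
Qed.

Lemma term_submodel_IND : models N (IND G).
Proof.
move=> _ [x [phi [Gphi ->]]]; apply/valid_Ind => rho.
pose params := [seq n <- fv phi | n != x].
pose tm n := sval (constructive_indefinite_description _ (term_submodel_named Lomega_zero (rho n))).
have tmP n : ground_in Lomega (tm n) /\ forall r, eval (M:=N) r (tm n) = rho n.
  by rewrite /tm; case: constructive_indefinite_description.
have [i Gi] : exists i, forall n, List.In n params -> ground_in (Lang (stage i)) (tm n).
  apply: exists_common_index => [j k t jk|n _]; last exact: ground_in_Lomega (tmP n).1.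
  by apply: ground_in_mono => ?; apply: Lang_stage_mono.
pose sigma n := if (n \in fv phi) && (n != x) then tm n else Var S n.
have psi_stage : stage i.+1 (sk QEx (Ind x (subst sigma phi))).
  apply: sk_Ind_instance_stage => // n; rewrite /sigma.
  case: ifP => Hn; rewrite Hn //; apply: Gi.
  by apply/In_mem; rewrite mem_filter andbC.
have sat_psi d : sat (M:=N) (upd rho x d) (subst sigma phi) <-> sat (upd rho x d) phi.
  apply: sat_subst_id => n; rewrite /sigma /upd.
  by case: ifP => [/andP [_ /negbTE ->]|_] //; apply: (tmP n).2.
apply/sat_Ind_body/(ind_principle_ext sat_psi)/sat_Ind_body.
exact: (valid_Ind N x _).1 (valid_term_submodel_stage psi_stage) rho.
Qed.
End GSIChain.

Theorem proposition13 (S : signature) (T G : theory S) :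
  inconsistent (tunion T (IND G)) ->
  inconsistent (GSIw G (sk_th QEx T)).
Proof.
move=> T_IND_inconsistent [M M_GSIw]; apply: T_IND_inconsistent.
exists (term_submodel M (Lomega_zero G (sk_th QEx T))) => A [TA|IND_A].
- by apply: (valid_term_submodel_stage M_GSIw (i := 0)); exists A.
- exact: term_submodel_IND.
Qed.
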